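(* Let $n\geq2$ and $1\leq k\leq n$ be integers and let $\overline\eta:\Lambda^1(\mathbb R^n)\to\Lambda^k(\mathbb R^n)$ be a linear map. Then there is $\eta\in\Lambda^{k-1}(\mathbb R^n)$ such that $\overline\eta(\theta)=\theta\wedge\eta$ for every $\theta\in\Lambda^1(\mathbb R^n)$ if and only if $\theta\wedge\overline\eta(\theta)=0$ for every $\theta\in\Lambda^1(\mathbb R^n)$.
   Context: $\Lambda^k(\mathbb R^n)$ denotes the real vector space of alternating $k$-linear forms on $\mathbb R^n$, with $\Lambda^0(\mathbb R^n)=\mathbb R$, and $\wedge$ is the exterior product. *)

From HB Require Import structures.
From mathcomp Require Import all_boot all_order all_algebra all_fingroup.
From mathcomp Require Import reals.
Set Implicit Arguments. Unset Strict Implicit. Unset Printing Implicit Defensive.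
Import Order.TTheory GRing.Theory Num.Theory.
Local Open Scope ring_scope.

Section Forms.
Variables (R : realType) (n : nat).

Definition mform (k : nat) := ('I_k -> 'rV[R]_n) -> R.

Definition upd (k : nat) (v : 'I_k -> 'rV[R]_n) (i : 'I_k) (x : 'rV[R]_n) :
  'I_k -> 'rV[R]_n := fun j => if j == i then x else v j.

Definition multilinear (k : nat) (f : mform k) : Prop :=
  forall (v : 'I_k -> 'rV[R]_n) (i : 'I_k) (a : R) (x y : 'rV[R]_n),
    f (upd v i (a *: x + y)) = a * f (upd v i x) + f (upd v i y).

Definition alternating (k : nat) (f : mform k) : Prop :=
  forall (v : 'I_k -> 'rV[R]_n) (i j : 'I_k), i != j -> v i = v j -> f v = 0.

Definition is_kform (k : nat) (f : mform k) : Prop :=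
  multilinear f /\ alternating f.

(* exterior product (Alt convention):
   (α ∧ β)(v) = 1/(p! q!) Σ_σ sgn σ α(v_σ(1..p)) β(v_σ(p+1..p+q)) *)
Definition wedge (p q : nat) (a : mform p) (b : mform q) : mform (p + q) :=
  fun v => (p`!%:R * q`!%:R)^-1 *
    \sum_(s : 'S_(p + q)) (-1) ^+ (odd_perm s) *
       a (fun i => v (s (lshift q i))) * b (fun j => v (s (rshift p j))).

Definition cast_form (p q : nat) (e : p = q) (f : mform p) : mform q :=
  fun v => f (fun i => v (cast_ord e i)).

Definition form_add (k : nat) (f g : mform k) : mform k := fun v => f v + g v.
Definition form_scale (k : nat) (a : R) (f : mform k) : mform k := fun v => a * f v.
Definition form0 (k : nat) : mform k := fun _ => 0.

Definition linear_map_1k (k : nat) (L : mform 1 -> mform k) : Prop :=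
  (forall th, is_kform th -> is_kform (L th)) /\
  (forall (a : R) th1 th2, is_kform th1 -> is_kform th2 ->
     L (form_add (form_scale a th1) th2) = form_add (form_scale a (L th1)) (L th2)).

End Forms.

(* If η̄(θ) = θ ∧ η, then θ ∧ η̄(θ) = θ ∧ θ ∧ η = 0: expanding along the two 1-form slots,
   the terms come in pairs that differ by exchanging the two copies of θ, and these cancel.
   Conversely, polarizing θ ∧ η̄(θ) = 0 gives θ ∧ η̄(φ) + φ ∧ η̄(θ) = 0.  Take φ = e^m,
   contract with e_m and sum over m.  Since ι_x (θ ∧ G) = θ(x) G - θ ∧ ι_x G,
   Σ_m θ(e_m) η̄(e^m) = η̄(θ) and Σ_m ι_(e_m) (e^m ∧ F) = (n - k) F for a k-form F, this yields
   (n - k + 1) η̄(θ) = θ ∧ Σ_m ι_(e_m) η̄(e^m), so η = (n - k + 1)⁻¹ Σ_m ι_(e_m) η̄(e^m) works.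
   Below, ι_x is [contract x], e^m is [coord1 m] and e_m is ['e_m]. *)

From HB Require Import structures.
From mathcomp Require Import all_boot all_order all_algebra all_fingroup.
From mathcomp Require Import boolp reals ring zify.
Set Implicit Arguments. Unset Strict Implicit. Unset Printing Implicit Defensive.
Import Order.TTheory GRing.Theory Num.Theory.
Local Open Scope ring_scope.

Section KForms.
Variables (R : realType) (n : nat).
Local Notation V := 'rV[R]_n.
Local Notation form := (mform R n).

(** * Alternating multilinear forms *)

Lemma upd_same k (v : 'I_k -> V) i x : upd v i x i = x.
Proof. by rewrite /upd eqxx. Qed.

Lemma upd_id k (v : 'I_k -> V) i : upd v i (v i) = v.
Proof. by apply: funext => j; rewrite /upd; case: eqP => // ->. Qed.

Lemma upd_comm k (v : 'I_k -> V) i j x y : i != j ->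
  upd (upd v i x) j y = upd (upd v j y) i x.
Proof.
move=> ij; apply: funext => l; rewrite /upd.
case: (eqVneq l j) => [-> | //]; case: (eqVneq j i) => // ji.
by rewrite ji eqxx in ij.
Qed.

Lemma multilinearD k (f : form k) : multilinear f ->
  forall v i x y, f (upd v i (x + y)) = f (upd v i x) + f (upd v i y).
Proof. by move=> Hf v i x y; have := Hf v i 1 x y; rewrite scale1r mul1r. Qed.

Lemma multilinear_sum k (f : form k) : multilinear f ->
  forall (I : Type) (r : seq I) (c : I -> R) (x : I -> V) w i,
  f (upd w i (\sum_(m <- r) c m *: x m)) = \sum_(m <- r) c m * f (upd w i (x m)).
Proof.
move=> Hf I r c x w i; elim: r => [|m r IH]; last by rewrite !big_cons Hf IH.
rewrite !big_nil; have := Hf w i 1 0 0.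
by rewrite scale1r addr0 mul1r -{1}[f _]addr0 => /addrI <-.
Qed.

Lemma is_kform0 k : is_kform (@form0 R n k).
Proof. by split => [v i a x y | v i j _ _]; rewrite /form0 ?mulr0 ?addr0. Qed.

Lemma is_kform_comb k (c : R) (f g : form k) : is_kform f -> is_kform g ->
  is_kform (form_add (form_scale c f) g).
Proof.
move=> [Hf Af] [Hg Ag]; split=> [v i a x y | v i j ij e].
  by rewrite /form_add /form_scale Hf Hg; ring.
by rewrite /form_add /form_scale (Af v i j) // (Ag v i j) // mulr0 addr0.
Qed.

Definition form_sum (I : Type) (r : seq I) (c : I -> R) k (f : I -> form k) : form k :=
  fun v => \sum_(i <- r) c i * f i v.

Lemma is_kform_sum (I : Type) (r : seq I) (c : I -> R) k (f : I -> form k) :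
  (forall i, is_kform (f i)) -> is_kform (form_sum r c f).
Proof.
move=> Hf; split=> [v i a x y | v i j ij e].
  rewrite /form_sum; under eq_bigr => l _ do rewrite (proj1 (Hf l)) mulrDr mulrCA.
  by rewrite big_split /= -big_distrr.
by rewrite /form_sum big1 // => l _; rewrite (proj2 (Hf l) v i j) ?mulr0.
Qed.

Lemma cast_form_id p (e : p = p) (f : form p) : cast_form e f = f.
Proof.
apply: funext => v; rewrite /cast_form; congr f.
by apply: funext => i; congr v; apply: val_inj.
Qed.

Definition antisymmetric k (f : form k) :=
  forall (v : 'I_k -> V) (s : 'S_k), f (fun i => v (s i)) = (-1) ^+ s * f v.

Lemma kform_swap k (f : form k) : is_kform f -> forall v i j x y, i != j ->
  f (upd (upd v i x) j y) = - f (upd (upd v i y) j x).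
Proof.
move=> [Hm Ha] v i j x y ij.
pose g a b := f (upd (upd v i a) j b).
have gDr a b1 b2 : g a (b1 + b2) = g a b1 + g a b2 by rewrite /g multilinearD.
have gDl a1 a2 b : g (a1 + a2) b = g a1 b + g a2 b.
  by rewrite /g !(upd_comm _ _ _ ij) multilinearD.
have g_diag z : g z z = 0.
  by apply: (Ha _ i j ij); rewrite upd_same /upd (negbTE ij) eqxx.
apply/eqP; rewrite -addr_eq0; apply/eqP.
by have := g_diag (x + y); rewrite gDl !gDr !g_diag add0r addr0.
Qed.

Lemma tperm_upd k (v : 'I_k -> V) i j :
  (fun l => v (tperm i j l)) = upd (upd v i (v j)) j (v i).
Proof.
apply: funext => l; rewrite /upd.
case: tpermP => [->|->|/eqP li /eqP lj]; rewrite ?eqxx.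
- by case: eqP => // ->.
- by [].
- by rewrite (negbTE li) (negbTE lj).
Qed.

Lemma kform_antisymmetric k (f : form k) : is_kform f -> antisymmetric f.
Proof.
move=> Hf v s; case: (prod_tpermP s) => ts -> {s}.
elim: ts v => [|t ts IH] v /=.
  move=> _; rewrite big_nil odd_perm1 mul1r; congr f.
  by apply: funext => i; rewrite perm1.
case/andP=> dt dts; rewrite big_cons.
set P := (\prod_(t0 <- ts) tperm t0.1 t0.2)%g; set w := fun i => v (P i).
have -> : (fun i => v ((tperm t.1 t.2 * P)%g i)) = fun i => w (tperm t.1 t.2 i).
  by apply: funext => l; rewrite permM.
rewrite tperm_upd kform_swap // !upd_id /w IH // odd_permM odd_tperm dt.
by rewrite signr_addb expr1 mulN1r mulNr.
Qed.

Definition coord1 (m : 'I_n) : form 1 := fun u => u ord0 0 m.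

Lemma is_kform_coord1 m : is_kform (coord1 m).
Proof.
split=> [v i a x y | v i j]; last by rewrite (ord1 i) (ord1 j) eqxx.
by rewrite /coord1 /upd (ord1 i) eqxx !mxE.
Qed.

Lemma form1_expand (th : form 1) : is_kform th ->
  th = form_sum (index_enum 'I_n) (fun m => th (fun _ => 'e_m)) coord1.
Proof.
move=> [Hm _]; apply: funext => u.
have const_upd x : (fun _ : 'I_1 => x) = upd u ord0 x.
  by apply: funext => i; rewrite /upd (ord1 i) eqxx.
rewrite -[in LHS](upd_id u ord0) [u ord0]row_sum_delta multilinear_sum //.
by apply: eq_bigr => m _; rewrite mulrC const_upd.
Qed.

(** * Exterior product *)

Lemma wedge_combl p q (c : R) (f g : form p) (h : form q) v :
  wedge (form_add (form_scale c f) g) h v = c * wedge f h v + wedge g h v.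
Proof.
rewrite /wedge /form_add /form_scale mulrCA -mulrDr; congr (_ * _).
rewrite big_distrr -big_split; apply: eq_bigr => s _ /=.
by rewrite mulrDr mulrDl !mulrA [_ * c]mulrC.
Qed.

Lemma wedge_combr p q (c : R) (f : form p) (g h : form q) v :
  wedge f (form_add (form_scale c g) h) v = c * wedge f g v + wedge f h v.
Proof.
rewrite /wedge /form_add /form_scale mulrCA -mulrDr; congr (_ * _).
rewrite big_distrr -big_split; apply: eq_bigr => s _ /=.
by rewrite mulrDr !mulrA [_ * c]mulrC !mulrA.
Qed.

Lemma wedge_sumr p q (I : Type) (r : seq I) (c : I -> R) (f : form p) (g : I -> form q) v :
  wedge f (form_sum r c g) v = \sum_(i <- r) c i * wedge f (g i) v.
Proof.
rewrite /wedge /form_sum; under [RHS]eq_bigr => i _ do rewrite mulrCA big_distrr.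
rewrite -big_distrr (exchange_big_dep xpredT) //=; congr (_ * _); apply: eq_bigr => s _.
by rewrite big_distrr; apply: eq_bigr => i _; rewrite /= mulrCA.
Qed.

Lemma wedge_antisymmetric p q (a : form p) (b : form q) : antisymmetric (wedge a b).
Proof.
move=> v r; rewrite /wedge mulrCA; congr (_ * _).
rewrite [in RHS](reindex_inj (mulIg r)) big_distrr; apply: eq_bigr => s _ /=.
rewrite odd_permM signr_addb !mulrA.
have -> : (-1) ^+ r * (-1) ^+ s * (-1) ^+ r = (-1) ^+ s :> R.
  by rewrite mulrAC -expr2 sqrr_sign mul1r.
by congr (_ * a _ * b _); apply: funext => i; rewrite permM.
Qed.

Lemma sum_perm_lift m (F : 'S_m.+1 -> R) :
  \sum_(s : 'S_m.+1) F s = \sum_(i < m.+1) \sum_(p : 'S_m) F (lift_perm ord0 i p).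
Proof.
have lift_perm_inj : injective (fun ip : 'I_m.+1 * 'S_m => lift_perm ord0 ip.1 ip.2).
  move=> [i p] [j t] /= /permP e.
  have eij : i = j by rewrite -(lift_perm_id ord0 i p) e lift_perm_id.
  subst j; congr (_, _); apply/permP => l; apply: (@lift_inj _ i).
  by rewrite -(lift_perm_lift ord0 i p) -(lift_perm_lift ord0 i t) e.
rewrite pair_big /= (reindex _ (onW_bij _ (inj_card_bij lift_perm_inj _))) //.
by rewrite card_prod !card_Sn card_ord factS.
Qed.

Lemma wedge1E q (a : form 1) (b : form q) : antisymmetric b ->
  forall v : 'I_(1 + q) -> V, wedge a b v =
    \sum_(i < q.+1) (-1) ^+ i * a (fun _ => v i) * b (fun j => v (lift i j)).
Proof.
move=> Hb v; rewrite /wedge sum_perm_lift.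
have term i (p : 'S_q) : (-1) ^+ lift_perm ord0 i p *
    a (fun l : 'I_1 => v (lift_perm ord0 i p (lshift q l))) *
    b (fun j => v (lift_perm ord0 i p (rshift 1 j))) =
    (-1) ^+ i * a (fun _ => v i) * b (fun j => v (lift i j)).
  have -> : (fun l : 'I_1 => v (lift_perm ord0 i p (lshift q l))) = fun _ => v i.
    apply: funext => l.
    rewrite (_ : lshift q l = ord0) ?lift_perm_id //.
    by apply: val_inj; rewrite /= (ord1 l).
  have -> : (fun j => v (lift_perm ord0 i p (rshift 1 j))) = fun j => v (lift i (p j)).
    apply: funext => j.
    by rewrite (_ : rshift 1 j = lift ord0 j) ?lift_perm_lift //; apply: val_inj.
  rewrite (Hb (fun j => v (lift i j))) odd_lift_perm; move: (odd_perm p) => sp.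
  have sp2 : (-1) ^+ sp * (-1) ^+ sp = 1 :> R by rewrite -expr2 sqrr_sign.
  rewrite !signr_addb !signr_odd expr0 mul1r.
  transitivity ((-1) ^+ i * ((-1) ^+ sp * (-1) ^+ sp) * a (fun _ => v i) *
                b (fun j => v (lift i j))); first by ring.
  by rewrite sp2 mulr1.
under eq_bigr => i _ do under eq_bigr => p _ do rewrite term.
rewrite mul1r; under eq_bigr => i _ do rewrite sumr_const card_Sn -mulr_natl.
by rewrite -big_distrr mulrA mulVf ?mul1r // pnatr_eq0 -lt0n fact_gt0.
Qed.

Lemma sumr_skew_eq0 (I : finType) (D : I -> I -> R) :
  (forall x y, D x y = - D y x) -> \sum_x \sum_y D x y = 0.
Proof.
move=> skew; set S := \sum_x _.
have SN : S = - S.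
  rewrite {1}/S exchange_big -sumrN; apply: eq_bigr => y _.
  by rewrite -sumrN; apply: eq_bigr => x _; exact: skew.
have /eqP : S *+ 2 = 0 by rewrite mulr2n {1}SN addNr.
by rewrite mulrn_eq0 /= => /eqP.
Qed.

Lemma lift_lift_swap m (x : 'I_m.+2) (j : 'I_m.+1) : exists j' : 'I_m.+1,
  [/\ lift (lift x j) j' = x,
      forall l : 'I_m, lift x (lift j l) = lift (lift x j) (lift j' l)
    & odd (x + j) = ~~ odd (lift x j + j')].
Proof.
have xlt := ltn_ord x; have jlt := ltn_ord j.
case: (leqP x j) => xj.
  have xm : (x < m.+1)%N by lia.
  exists (Ordinal xm); split.
  - by apply: val_inj => /=; rewrite /bump; lia.
  - by move=> l; apply: val_inj => /=; rewrite /bump; lia.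
  - by rewrite /= /bump xj /= !oddD /=; case: (odd x); case: (odd j).
have xm : (x.-1 < m.+1)%N by lia.
exists (Ordinal xm); split.
- by apply: val_inj => /=; rewrite /bump; lia.
- by move=> l; apply: val_inj => /=; rewrite /bump; lia.
- rewrite /= /bump (_ : (x <= j)%N = false) /=; last by lia.
  case: (nat_of_ord x) xj => [|x'] //= _.
  by rewrite !oddD /=; case: (odd x'); case: (odd j).
Qed.

Lemma wedge1_self q (a : form 1) (b : form q) : antisymmetric b ->
  forall v : 'I_(1 + (1 + q)) -> V, wedge a (wedge a b) v = 0.
Proof.
move=> Hb v; rewrite wedge1E; last exact: wedge_antisymmetric.
pose T (i : 'I_q.+2) (j : 'I_q.+1) := (-1) ^+ i * a (fun _ => v i) *
  ((-1) ^+ j * a (fun _ => v (lift i j)) * b (fun l => v (lift i (lift j l)))).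
pose D (x y : 'I_q.+2) := if unlift x y is Some j then T x j else 0.
have rowD (i : 'I_q.+2) : (-1) ^+ i * a (fun _ => v i) * wedge a b (fun j => v (lift i j)) =
    \sum_y D i y.
  rewrite wedge1E // big_distrr (bigD1_ord i) //= /D unlift_none add0r.
  by apply: eq_bigr => j _; rewrite liftK.
rewrite (eq_bigr _ (fun i _ => rowD i)); apply: sumr_skew_eq0 => x y.
rewrite /D; case: unliftP => [j ->|->]; last by rewrite unlift_none oppr0.
have [j' [xE liftE oddE]] := lift_lift_swap x j.
rewrite -[X in unlift _ X]xE liftK /T xE.
have -> : (fun l => v (lift (lift x j) (lift j' l))) = fun l => v (lift x (lift j l)).
  by apply: funext => l; rewrite liftE.
have sg : (-1) ^+ x * (-1) ^+ j = - ((-1) ^+ (lift x j) * (-1) ^+ j') :> R.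
  by rewrite -!exprD -signr_odd oddE signrN signr_odd.
set A := a (fun=> v x); set B := a (fun=> v (lift x j)); set C := b _.
transitivity ((-1) ^+ x * (-1) ^+ j * A * B * C); first by ring.
by rewrite sg; ring.
Qed.

(** * Interior product *)

Definition vcons q (x : V) (u : 'I_q -> V) : 'I_q.+1 -> V :=
  fun j => if unlift ord0 j is Some j' then u j' else x.

Lemma vcons0 q x (u : 'I_q -> V) : vcons x u ord0 = x.
Proof. by rewrite /vcons unlift_none. Qed.

Lemma vcons_lift q x (u : 'I_q -> V) j : vcons x u (lift ord0 j) = u j.
Proof. by rewrite /vcons liftK. Qed.

Lemma vcons_upd q x (u : 'I_q -> V) i y :
  vcons x (upd u i y) = upd (vcons x u) (lift ord0 i) y.
Proof.
apply: funext => l; rewrite /upd.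
case: (unliftP ord0 l) => [l'|] ->; first by rewrite !vcons_lift (inj_eq lift_inj).
by rewrite !vcons0 (negbTE (neq_lift _ _)).
Qed.

Lemma upd_vcons0 q x y (u : 'I_q -> V) : upd (vcons y u) ord0 x = vcons x u.
Proof.
apply: funext => l; rewrite /upd.
case: (unliftP ord0 l) => [l'|] ->; last by rewrite eqxx vcons0.
by rewrite eq_sym (negbTE (neq_lift _ _)) !vcons_lift.
Qed.

Lemma vcons_lift_perm q (v : 'I_q.+1 -> V) j :
  vcons (v j) (fun l => v (lift j l)) = fun l => v (lift_perm ord0 j 1 l).
Proof.
apply: funext => l; case: (unliftP ord0 l) => [l'|] ->.
  by rewrite vcons_lift lift_perm_lift perm1.
by rewrite vcons0 lift_perm_id.
Qed.

Lemma vcons_lift_lift q x (v : 'I_q.+1 -> V) (j : 'I_q.+1) :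
  (fun l => vcons x v (lift (lift ord0 j) l)) = vcons x (fun l => v (lift j l)).
Proof.
apply: funext => l; case: (unliftP ord0 l) => [l'|] ->.
  have -> : lift (lift ord0 j) (lift ord0 l') = lift ord0 (lift j l').
    by apply: val_inj; rewrite /= /bump; lia.
  by rewrite !vcons_lift.
have -> : lift (lift ord0 j) ord0 = ord0 :> 'I_q.+2 by apply: val_inj.
by rewrite !vcons0.
Qed.

Lemma antisymmetric_vcons q (F : form q.+1) : antisymmetric F ->
  forall (v : 'I_q.+1 -> V) j, F (vcons (v j) (fun l => v (lift j l))) = (-1) ^+ j * F v.
Proof.
move=> HF v j; rewrite vcons_lift_perm HF odd_lift_perm odd_perm1 addbF.
by rewrite /= signr_odd.
Qed.

Lemma kform_vcons_expand q (F : form q.+1) : is_kform F ->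
  forall x (w : 'I_q -> V), F (vcons x w) = \sum_(m < n) x 0 m * F (vcons 'e_m w).
Proof.
move=> [HF _] x w; rewrite -(upd_vcons0 x 0) [in LHS](row_sum_delta x).
by rewrite multilinear_sum //; apply: eq_bigr => m _; rewrite upd_vcons0.
Qed.

Definition contract k (x : V) (f : form k.+1) : form k := fun u => f (vcons x u).

Lemma is_kform_contract k x (f : form k.+1) : is_kform f -> is_kform (contract x f).
Proof.
move=> [Hm Ha]; split=> [u i a y z | u i j ij e]; first by rewrite /contract !vcons_upd Hm.
by apply: (Ha _ (lift ord0 i) (lift ord0 j)); rewrite ?(inj_eq lift_inj) ?vcons_lift.
Qed.

Lemma contract_wedge1 q x (a : form 1) (b : form q.+1) : is_kform b ->
  forall v, contract (k := q.+1) x (wedge a b) v =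
            a (fun _ => x) * b v - wedge a (contract x b) v.
Proof.
move=> Hb v; have Hcb := kform_antisymmetric (is_kform_contract x Hb).
rewrite (wedge1E a Hcb) /contract wedge1E; last exact: kform_antisymmetric.
rewrite big_ord_recl expr0 mul1r vcons0 -sumrN; congr (_ * b _ + _).
  by apply: funext => j; rewrite vcons_lift.
apply: eq_bigr => j _; rewrite vcons_lift vcons_lift_lift.
by rewrite /= /bump /= add1n exprS mulN1r !mulNr.
Qed.

Lemma sum_contract_wedge_coord q (F : form q.+1) : is_kform F -> forall v,
  \sum_(m < n) contract (k := q.+1) 'e_m (wedge (coord1 m) F) v = (n%:R - q.+1%:R) * F v.
Proof.
move=> HF v; under eq_bigr => m _ do rewrite contract_wedge1 //.
rewrite sumrB mulrBl; congr (_ - _).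
  under eq_bigr => m _ do rewrite /coord1 mxE !eqxx mul1r.
  by rewrite sumr_const card_ord mulr_natl.
under eq_bigr => m _ do rewrite (wedge1E _ (kform_antisymmetric (is_kform_contract _ HF))).
have -> : q.+1%:R * F v = \sum_(j < q.+1) F v by rewrite sumr_const card_ord mulr_natl.
rewrite exchange_big /=; apply: eq_bigr => j _.
under eq_bigr => m _ do rewrite /coord1 -mulrA.
rewrite -big_distrr /= /contract -kform_vcons_expand //.
rewrite antisymmetric_vcons; last exact: kform_antisymmetric.
by rewrite mulrA -expr2 sqrr_sign mul1r.
Qed.

(** * Linear maps from 1-forms *)

Section LinearMap.
Variables (k : nat) (L : form 1 -> form k).
Hypothesis HL : linear_map_1k L.

Lemma linear_map_1k_form0 : L (@form0 R n 1) = @form0 R n k.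
Proof.
have e : form_add (form_scale 1 (@form0 R n 1)) (@form0 R n 1) = @form0 R n 1.
  by apply: funext => u; rewrite /form_add /form_scale /form0 mulr0 addr0.
have := (proj2 HL) 1 _ _ (is_kform0 1) (is_kform0 1); rewrite e => HL0.
apply: funext => w; have := congr1 (fun F => F w) HL0.
by rewrite /form_add /form_scale mul1r -{1}[L _ w]addr0 => /addrI <-.
Qed.

Lemma linear_map_1k_sum (I : Type) (r : seq I) (c : I -> R) (f : I -> form 1) :
  (forall i, is_kform (f i)) -> L (form_sum r c f) = form_sum r c (fun i => L (f i)).
Proof.
move=> Hf; elim: r => [|i r IH].
  have -> : form_sum [::] c f = @form0 R n 1.
    by apply: funext => u; rewrite /form_sum big_nil.
  by rewrite linear_map_1k_form0; apply: funext => u; rewrite /form_sum big_nil.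
have cons_sum (g : I -> form _) :
    form_sum (i :: r) c g = form_add (form_scale (c i) (g i)) (form_sum r c g).
  by apply: funext => u; rewrite /form_sum big_cons.
by rewrite !cons_sum (proj2 HL) ?IH //; apply: is_kform_sum.
Qed.

Lemma linear_map_1k_expand th : is_kform th ->
  L th = form_sum (index_enum 'I_n) (fun m => th (fun _ => 'e_m)) (fun m => L (coord1 m)).
Proof.
by move=> Hth; rewrite {1}(form1_expand Hth) linear_map_1k_sum //; apply: is_kform_coord1.
Qed.

Lemma wedge_polar :
  (forall th, is_kform th -> wedge th (L th) = @form0 R n (1 + k)) ->
  forall th ph, is_kform th -> is_kform ph ->
  forall w, wedge th (L ph) w + wedge ph (L th) w = 0.
Proof.
move=> Hzero th ph Hth Hph w.
have := congr1 (fun F => F w) (Hzero _ (is_kform_comb 1 Hth Hph)).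
rewrite (proj2 HL) // /form0 wedge_combl !wedge_combr.
have := congr1 (fun F => F w) (Hzero _ Hth); have := congr1 (fun F => F w) (Hzero _ Hph).
by rewrite /form0 => -> ->; rewrite !mul1r !addr0 add0r.
Qed.

End LinearMap.

Lemma sum_contract_wedge_linear q (L : form 1 -> form q.+1) (th : form 1)
    (v : 'I_q.+1 -> V) :
  linear_map_1k L -> is_kform th ->
  \sum_(m < n) contract (k := q.+1) 'e_m (wedge th (L (coord1 m))) v =
  L th v - \sum_(m < n) wedge th (contract 'e_m (L (coord1 m))) v.
Proof.
move=> HL Hth; rewrite (linear_map_1k_expand HL Hth) /form_sum -sumrB.
by apply: eq_bigr => m _; rewrite contract_wedge1 //; apply/(proj1 HL)/is_kform_coord1.
Qed.

End KForms.

Theorem proposition4p1 (R : realType) (n k : nat) (hn : (2 <= n)%N)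
  (hk : (0 < k)%N) (hkn : (k <= n)%N) (L : mform R n 1 -> mform R n k) :
  linear_map_1k L ->
  ((exists eta : mform R n k.-1, is_kform eta /\
      forall th : mform R n 1, is_kform th ->
        L th = cast_form (prednK hk) (wedge th eta))
   <->
   (forall th : mform R n 1, is_kform th -> wedge th (L th) = @form0 R n (1 + k))).
Proof.
case: k hk hkn L => [//|q] hk hkn L HL; split.
  move=> [eta [Heta HLeta]] th Hth; apply: funext => v.
  by rewrite HLeta // cast_form_id; apply: wedge1_self; apply: kform_antisymmetric.
move=> Hzero; set c : R := n%:R - q%:R.
have c_neq0 : c != 0 by rewrite subr_eq0 eqr_nat; lia.
exists (form_sum (index_enum 'I_n) (fun=> c^-1) (fun m => contract 'e_m (L (coord1 m)))).
split=> [|th Hth].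
  by apply: is_kform_sum => m; apply/is_kform_contract/(proj1 HL)/is_kform_coord1.
rewrite cast_form_id; apply: funext => v; have HF : is_kform (L th) := proj1 HL _ Hth.
have contracted_polar :
    \sum_(m < n) (contract (k := q.+1) 'e_m (wedge th (L (coord1 m))) v +
                  contract (k := q.+1) 'e_m (wedge (coord1 m) (L th)) v) = 0.
  by apply: big1 => m _; apply: wedge_polar => //; apply: is_kform_coord1.
rewrite big_split /= sum_contract_wedge_linear // in contracted_polar.
rewrite sum_contract_wedge_coord // in contracted_polar.
rewrite wedge_sumr -big_distrr /=; apply: (mulfI c_neq0); rewrite mulrA mulfV // mul1r.
apply/eqP; rewrite -subr_eq0 -[X in _ == X]contracted_polar; apply/eqP.
by rewrite /c -natr1; ring.
Qed.
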